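(* Let $V$ be a crossed module and $M$ an abelian $\pi_0(V)$-module. A $2$-cochain $z\in C^2(V,M)$ is a $2$-cocycle if and only if: (a) $z(m,h,g)=z_M(m)-z_G(\mu(m),h)+z_G(h,g)$ for all $m\in M_V$, $g,h\in G_V$; (b) $z_G\in Z^2(G_V,M)$ (group $2$-cocycle, $G_V$ acting on $M$ via $G_V\to\pi_0(V)$); (c) $z_M(nm)=z_M(n)+z_M(m)-z_G(\mu(n),\mu(m))$ for all $m,n\in M_V$; (d) $z_M({}^gm)=\bar g\cdot z_M(m)+z_G(\mu({}^gm),g)-z_G(g,\mu(m))$ for all $m\in M_V$, $g\in G_V$.
   Context: Crossed module $V$: group $G_V$, group $M_V$ with left $G_V$-action ${}^gm$, homomorphism $\mu:M_V\to G_V$ with $\mu({}^gm)=g\mu(m)g^{-1}$, ${}^{\mu(n)}m=nmn^{-1}$; $\pi_0(V)=G_V/\mu(M_V)$, $\bar g$ the class of $g$. The cochain complex of $V$ with coefficients in $M$ has $C^2(V,M)=\mathrm{Map}(M_V\times G_V\times G_V,M)$, $C^3(V,M)=\mathrm{Map}(M_V\times M_V\times G_V\times M_V\times G_V\times G_V,M)$, with $(dc)(p,n,k,m,h,g)=c(p,\mu(n)k,\mu(m)h)-c(pn,k,hg)+c(n\,{}^km,kh,g)-\bar k\cdot c(m,h,g)$; $Z^2(V,M)$ is the kernel. For $c\in C^2(V,M)$: module part $c_M(m):=c(m,1,1)$, group part $c_G(h,g):=c(1,h,g)$. Group cochains: $C^2(\Pi,M)=\mathrm{Map}(\Pi^2,M)$,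 $(dc)(r,q,p)=c(r,q)-c(r,qp)+c(rq,p)-r\cdot c(q,p)$. *)

(* abelian groups are zmodType; general (possibly infinite)
   groups are given by an explicit record. *)
From HB Require Import structures.
From mathcomp Require Import all_boot all_algebra.
Set Implicit Arguments. Unset Strict Implicit. Unset Printing Implicit Defensive.
Import GRing.Theory.
Local Open Scope ring_scope.

Record Group := {
  gcar :> Type;
  gmul : gcar -> gcar -> gcar;
  gone : gcar;
  ginv : gcar -> gcar;
  gmulA : forall x y z, gmul x (gmul y z) = gmul (gmul x y) z;
  gmul1x : forall x, gmul gone x = x;
  gmulx1 : forall x, gmul x gone = x;
  gmulVx : forall x, gmul (ginv x) x = gone;
  gmulxV : forall x, gmul x (ginv x) = gone
}.
Arguments gone {g}.


Record CrossedModule := {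
  GV : Group;
  MV : Group;
  xact : GV -> MV -> MV;
  xact1 : forall m, xact gone m = m;
  xactM : forall g h m, xact (gmul g h) m = xact g (xact h m);
  xact_mul : forall g m n, xact g (gmul m n) = gmul (xact g m) (xact g n);
  mu : MV -> GV;
  muM : forall m n, mu (gmul m n) = gmul (mu m) (mu n);
  mu_act : forall g m, mu (xact g m) = gmul (gmul g (mu m)) (ginv g);
  peiffer : forall n m, xact (mu n) m = gmul (gmul n m) (ginv n)
}.

(* An abelian pi_0(V)-module, where pi_0(V) = G_V / mu(M_V): an abelian
   group M with an additive G_V-action that is trivial on mu(M_V), i.e. an
   action of G_V factoring through the projection G_V -> pi_0(V).
   [pact g x] is  \bar g . x. *)
Record Pi0Module (V : CrossedModule) := {
  pcar : zmodType;
  pact : GV V -> pcar -> pcar;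
  pact_add : forall g x y, pact g (x + y) = pact g x + pact g y;
  pact1 : forall x, pact gone x = x;
  pactM : forall g h x, pact (gmul g h) x = pact g (pact h x);
  pact_mu : forall n x, pact (mu n) x = x
}.

Arguments pact {V} p g x : rename.

Definition C2 (V : CrossedModule) (M : Pi0Module V) :=
  MV V -> GV V -> GV V -> pcar M.

Definition d2 (V : CrossedModule) (M : Pi0Module V) (c : C2 M)
  (p n : MV V) (k : GV V) (m : MV V) (h g : GV V) : pcar M :=
  c p (gmul (mu n) k) (gmul (mu m) h) - c (gmul p n) k (gmul h g)
  + c (gmul n (xact k m)) (gmul k h) g - pact M k (c m h g).

Definition is_2cocycle (V : CrossedModule) (M : Pi0Module V) (c : C2 M) :=
  forall p n k m h g, d2 c p n k m h g = 0.

Definition cM (V : CrossedModule) (M : Pi0Module V) (c : C2 M) (m : MV V) :=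
  c m gone gone.
Definition cG (V : CrossedModule) (M : Pi0Module V) (c : C2 M) (h g : GV V) :=
  c gone h g.

(* Group 2-cocycles of G_V with coefficients in M (G_V acting through pi_0),
   with the paper's coboundary convention. *)
Definition is_group_2cocycle (V : CrossedModule) (M : Pi0Module V)
  (c : GV V -> GV V -> pcar M) :=
  forall r q p : GV V,
    c r q - c r (gmul q p) + c (gmul r q) p - pact M r (c q p) = 0.

(* A cocycle z is forced to be of the form (a): evaluating dz = 0 at tuples
   with identities in all but two slots shows first that z(m,1,h) does not
   depend on h, and then that z(m,h,g) = z(m,1,1) - z(1,mu m,h) + z(1,h,g).
   Further specialisations give (b), (c) and (d).  Conversely, for a cochain
   of the form (a), (c) and (d) eliminate z_M from dz, and what is left is a
   signed sum of six instances of the group cocycle identity (b), using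
   mu(^k m) k = k mu(m). *)
From Pilot Require Import Defs.
From mathcomp Require Import all_boot all_algebra.
Import GRing.Theory.
Local Open Scope ring_scope.

Inductive zexpr := ZAtom of nat | ZZero | ZAdd of zexpr & zexpr | ZOpp of zexpr.

Section ZmodNormalization.
Variable U : zmodType.

Fixpoint zeval (env : seq U) (e : zexpr) : U :=
  match e with
  | ZAtom i => env`_i
  | ZZero => 0
  | ZAdd e1 e2 => zeval env e1 + zeval env e2
  | ZOpp e1 => - zeval env e1
  end.

Fixpoint zcoef (e : zexpr) (i : nat) : int :=
  match e with
  | ZAtom j => (i == j)%:Z
  | ZZero => 0
  | ZAdd e1 e2 => zcoef e1 i + zcoef e2 i
  | ZOpp e1 => - zcoef e1 i
  end.

Lemma zevalE env e : zeval env e = \sum_(i < size env) env`_i *~ zcoef e i.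
Proof.
elim: e => [j | | e1 IH1 e2 IH2 | e1 IH1] /=.
- have [lt_j | ge_j] := ltnP j (size env).
    rewrite (bigD1 (Ordinal lt_j)) //= eqxx mulr1z big1 ?addr0 // => i ne_ij.
    by have /negbTE -> : (i : nat) != j := ne_ij; rewrite mulr0z.
  rewrite nth_default // big1 // => i _.
  by rewrite ltn_eqF ?mulr0z // (leq_trans (ltn_ord i)).
- by rewrite big1 // => i _; rewrite mulr0z.
- by rewrite IH1 IH2 -big_split; apply: eq_bigr => i _; rewrite mulrzDr.
- by rewrite IH1 -sumrN; apply: eq_bigr => i _; rewrite mulrNz.
Qed.

Lemma zeval_eq0 env e :
  all (fun i => zcoef e i == 0) (iota 0 (size env)) -> zeval env e = 0.
Proof.
move=> /allP coef0; rewrite zevalE big1 // => i _.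
by rewrite (eqP (coef0 i _)) ?mulr0z // mem_iota ltn_ord.
Qed.

Lemma subr0_addr (x y d : U) : x = y -> d + (x - y) = 0 -> d = 0.
Proof. by move=> ->; rewrite subrr addr0. Qed.

Lemma subr0_subr (x y d : U) : x = y -> d - (x - y) = 0 -> d = 0.
Proof. by move=> ->; rewrite subrr subr0. Qed.

End ZmodNormalization.

Arguments zeval {U}.
Arguments subr0_addr {U x y d}.
Arguments subr0_subr {U x y d}.

Ltac zindex x l :=
  lazymatch l with
  | x :: _ => constr:(0%N)
  | _ :: ?l' => let n := zindex x l' in constr:(S n)
  end.

Ltac zsnoc x l :=
  lazymatch l with
  | nil => constr:([:: x])
  | ?y :: ?l' => let l'' := zsnoc x l' in constr:(y :: l'')
  end.

Ltac zatoms e l :=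
  lazymatch e with
  | ?a + ?b => let l' := zatoms a l in zatoms b l'
  | - ?a => zatoms a l
  | 0 => l
  | _ => match constr:(tt) with
         | _ => let _ := zindex e l in l
         | _ => zsnoc e l
         end
  end.

Ltac zreify e l :=
  lazymatch e with
  | ?a + ?b => let x := zreify a l in let y := zreify b l in constr:(ZAdd x y)
  | - ?a => let x := zreify a l in constr:(ZOpp x)
  | 0 => constr:(ZZero)
  | _ => let n := zindex e l in constr:(ZAtom n)
  end.

Ltac zmod_eq0 :=
  lazymatch goal with |- ?e = 0 =>
    let T := type of e in
    let l := zatoms e (@nil T) in
    let r := zreify e l in
    change (zeval l r = 0); apply: zeval_eq0; vm_compute; reflexivity
  end.

(* Proves an equation in an abelian group as a signed sum of ALL the
   equations of that type in the context, trying both signs of each. *)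
Ltac zmod_combine :=
  lazymatch goal with
  | H : @eq ?T _ _ |- @eq ?T _ _ =>
      first [ apply: (subr0_addr H); clear H; zmod_combine
            | apply: (subr0_subr H); clear H; zmod_combine ]
  | |- _ => zmod_eq0
  end.

Ltac zmod_lin := intros; apply: subr0_eq; zmod_combine.

Section GroupFacts.
Variable G : Defs.Group.
Implicit Types x y : G.

Lemma gmulKg x y : gmul (ginv x) (gmul x y) = y.
Proof. by rewrite gmulA gmulVx gmul1x. Qed.

Lemma gmul_idem1 x : gmul x x = x -> x = gone.
Proof. by move=> idem_x; rewrite -(gmulKg x x) idem_x gmulVx. Qed.

End GroupFacts.

Section CrossedModuleFacts.
Variable V : CrossedModule.

Lemma mu1 : mu (@gone (MV V)) = gone.
Proof. by apply: gmul_idem1; rewrite -muM gmul1x. Qed.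

Lemma xact_g1 (g : GV V) : xact g (@gone (MV V)) = gone.
Proof. by apply: gmul_idem1; rewrite -xact_mul gmul1x. Qed.

Lemma mu_act_mul (k : GV V) (m : MV V) :
  gmul (mu (xact k m)) k = gmul k (mu m).
Proof. by rewrite mu_act -gmulA gmulVx gmulx1. Qed.

Lemma mu_act_mulA (k h : GV V) (m : MV V) :
  gmul (mu (xact k m)) (gmul k h) = gmul k (gmul (mu m) h).
Proof. by rewrite gmulA mu_act_mul -gmulA. Qed.

Variable M : Pi0Module V.

Lemma pact0 g : pact M g 0 = 0.
Proof. by apply: (addrI (pact M g 0)); rewrite -pact_add !addr0. Qed.

Lemma pactN g x : pact M g (- x) = - pact M g x.
Proof. by apply/eqP; rewrite -subr_eq0 opprK -pact_add addNr pact0. Qed.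

Lemma d2_ext (c c' : C2 M) : (forall m h g, c m h g = c' m h g) ->
  forall p n k m h g, d2 c p n k m h g = d2 c' p n k m h g.
Proof. by move=> eq_cc' p n k m h g; rewrite /d2 !eq_cc'. Qed.

End CrossedModuleFacts.

Arguments d2_ext {V M c c'}.

Section CocycleComponents.
Variables (V : CrossedModule) (M : Pi0Module V) (z : C2 M).
Hypothesis z_cocycle : is_2cocycle z.

Lemma cocycle_1_right (m : MV V) (h : GV V) : z m gone h = cM z m.
Proof.
have := z_cocycle m gone gone gone h (ginv h).
by rewrite /d2 /cM mu1 xact_g1 !gmul1x !gmulx1 pact1 gmulxV; zmod_lin.
Qed.

Lemma cocycle_decomp (m : MV V) (h g : GV V) :
  z m h g = cM z m - cG z (mu m) h + cG z h g.
Proof.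
have := z_cocycle gone m gone gone h g.
by rewrite /d2 /cG mu1 xact_g1 !gmul1x !gmulx1 pact1 cocycle_1_right; zmod_lin.
Qed.

Lemma cocycle_group_part : is_group_2cocycle (cG z).
Proof.
move=> r q p; have := z_cocycle gone gone r gone q p.
by rewrite /d2 mu1 xact_g1 !gmul1x.
Qed.

Lemma cocycle_module_mul (n m : MV V) :
  cM z (gmul n m) = cM z n + cM z m - cG z (mu n) (mu m).
Proof.
have := z_cocycle n m gone gone gone gone.
have := cocycle_decomp n (mu m) gone.
have := cocycle_group_part (mu m) gone gone.
rewrite /d2 /cM /cG mu1 xact_g1 !gmul1x !gmulx1 pact1 pact_mu.
by zmod_lin.
Qed.

Lemma cocycle_module_act (m : MV V) (g : GV V) :
  cM z (xact g m) = pact M g (cM z m) + cG z (mu (xact g m)) g - cG z g (mu m).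
Proof.
have := z_cocycle gone gone g m gone gone.
have := cocycle_decomp (xact g m) g gone.
rewrite /d2 /cM /cG mu1 !gmul1x !gmulx1.
by zmod_lin.
Qed.

End CocycleComponents.

Section CocycleFromComponents.
Variables (V : CrossedModule) (M : Pi0Module V).
Variables (a : MV V -> pcar M) (b : GV V -> GV V -> pcar M).
Hypothesis b_cocycle : is_group_2cocycle b.
Hypothesis a_mul : forall n m, a (gmul n m) = a n + a m - b (mu n) (mu m).
Hypothesis a_act : forall m g,
  a (xact g m) = pact M g (a m) + b (mu (xact g m)) g - b g (mu m).

Definition assemble_2cochain : C2 M := fun m h g => a m - b (mu m) h + b h g.

Lemma assemble_2cochain_cocycle : is_2cocycle assemble_2cochain.
Proof.
move=> p n k m h g; rewrite /d2 /assemble_2cochain !a_mul a_act !muM.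
rewrite !pact_add !pactN.
have B1 := b_cocycle k h g.
have B2 := b_cocycle (mu p) (mu n) k.
have B3 := b_cocycle (mu n) (mu (xact k m)) (gmul k h).
have B4 := b_cocycle (mu n) k (gmul (mu m) h).
have B5 := b_cocycle (mu (xact k m)) k h.
have B6 := b_cocycle k (mu m) h.
rewrite !pact_mu in B2 B3 B4 B5.
rewrite mu_act_mulA in B3; rewrite mu_act_mul in B5.
by zmod_lin.
Qed.

End CocycleFromComponents.

Theorem proposition3p11 (V : CrossedModule) (M : Pi0Module V) (z : C2 M) :
  is_2cocycle z <->
  [/\ (forall (m : MV V) (h g : GV V),
         z m h g = cM z m - cG z (mu m) h + cG z h g),
      is_group_2cocycle (cG z),
      (forall n m : MV V,
         cM z (gmul n m) = cM z n + cM z m - cG z (mu n) (mu m)) &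
      (forall (m : MV V) (g : GV V),
         cM z (xact g m) = pact M g (cM z m) + cG z (mu (xact g m)) g
                           - cG z g (mu m))].
Proof.
split=> [z_cocycle | [z_decomp zG_cocycle zM_mul zM_act] p n k m h g].
  split; [exact: cocycle_decomp | exact: cocycle_group_part |
          exact: cocycle_module_mul | exact: cocycle_module_act].
rewrite (d2_ext z_decomp).
exact: assemble_2cochain_cocycle.
Qed.
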